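(* Let $\mathcal S\subset\mathbb R^n$ be a finite positive spanning set of unit vectors and $P=\{x\in\mathbb R^n: x^\top d\le 1 \text{ for all } d\in\mathcal S\}$. (i) Let $x$ be a vertex of $P$, $\mathcal T=\{d\in\mathcal S: x^\top d=1\}$, and let $\mathcal B\subseteq\mathcal T$ be a basis of $\mathbb R^n$. Then $\frac{x}{\|x\|}$ is a Gram vector of $\mathcal B$ with Gram value $\frac1{\|x\|}$, and $K^\circ\!\left(\mathcal B,\frac{x}{\|x\|}\right)\cap\mathcal S=\varnothing$. (ii) Let $\mathcal B\subseteq\mathcal S$ be a basis of $\mathbb R^n$ and $u$ the Gram vector of $\mathcal B$ with Gram value $\alpha$. If $K^\circ(\mathcal B,u)\cap\mathcal S=\varnothing$, then $\frac u\alpha$ is the unique vertex of $P$ such that $\left(\frac u\alpha\right)^\top d=1$ for all $d\in\mathcal B$.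
   Context: A finite set $\{d_1,\dots,d_k\}\subset\mathbb R^n$ is positive spanning if $\{\sum_i\lambda_id_i:\lambda_i\ge0\}=\mathbb R^n$. For a basis $\mathcal B=\{d_1,\dots,d_n\}$ of $\mathbb R^n$, a Gram vector of $\mathcal B$ with Gram value $\gamma_{\mathcal B}$ is a unit vector $u$ with $u^\top d_i=\gamma_{\mathcal B}>0$ for all $i$. For a set $\mathcal B$ of unit vectors and a unit vector $y$ with $d^\top y=\alpha_{\mathcal B}$ for all $d\in\mathcal B$ (a common value), $K^\circ(\mathcal B,y)=\{v\in\mathbb R^n: v\ne\mathbf 0,\ \frac{v^\top y}{\|v\|\|y\|}>\alpha_{\mathcal B}\}\cup\{\mathbf 0\}$. *)

From HB Require Import structures.
From mathcomp Require Import all_boot all_order all_algebra.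
Set Implicit Arguments. Unset Strict Implicit. Unset Printing Implicit Defensive.
Import Order.TTheory GRing.Theory Num.Theory.
Local Open Scope ring_scope.

Section Defs.
Variables (R : rcfType) (n : nat).
Notation vec := 'rV[R]_n.

Definition dotp (u v : vec) : R := \sum_(i < n) u 0 i * v 0 i.
Definition enorm (u : vec) : R := Num.sqrt (dotp u u).

Definition positive_spanning (S : seq vec) : Prop :=
  forall v : vec, exists lam : vec -> R,
    (forall d, d \in S -> 0 <= lam d) /\ v = \sum_(d <- S) lam d *: d.

Definition polyP (S : seq vec) (x : vec) : Prop :=
  forall d, d \in S -> dotp x d <= 1.

Definition is_vertex (S : seq vec) (x : vec) : Prop :=
  polyP S x /\
  forall (y z : vec) (t : R), polyP S y -> polyP S z -> 0 < t < 1 ->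
    x = t *: y + (1 - t) *: z -> y = z.

Definition is_gram_vector (B : seq vec) (u : vec) (g : R) : Prop :=
  enorm u = 1 /\ 0 < g /\ forall d, d \in B -> dotp u d = g.

(* common value alpha_B = d^T y (taken at the first element of B; it is
   common to all d in B whenever K_circ is used in the paper) *)
Definition alphaB (B : seq vec) (y : vec) : R := dotp (head 0 B) y.

Definition in_Kcirc (B : seq vec) (y v : vec) : Prop :=
  v = 0 \/ (v != 0 /\ dotp v y / (enorm v * enorm y) > alphaB B y).

End Defs.

(** For unit vectors [d] and [y], membership of [d] in [K°(B, y)] just
    says [d^T y > alpha_B].  If [y] is a Gram vector of [B]
    with value [g], then [d] lies outside [K°(B, y)] iff [d^T (y / g) <= 1],
    i.e. iff [y / g] satisfies the constraint of [P] given by [d].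

    (i) A vertex [x] tight on a basis [B] has [x^T d = 1] on [B], so
    [x / |x|] is a Gram vector of [B] with value [1 / |x|]; as [x] lies in
    [P], no [d] of [S] is in [K°].
    (ii) Conversely [u / alpha] lies in [P] and is tight on the basis [B].
    A point of [P] tight on a spanning set of constraints is a vertex: in any
    convex decomposition both endpoints must also be tight on that set, and a
    linear functional is determined by its values on a spanning set. *)
From Pilot Require Import Defs.
From HB Require Import structures.
From mathcomp Require Import all_boot all_order all_algebra.
From mathcomp Require Import lra.
Set Implicit Arguments.
Unset Strict Implicit.
Unset Printing Implicit Defensive.
Import Order.TTheory GRing.Theory Num.Theory.
Local Open Scope ring_scope.

Section EuclideanSpace.
Variables (R : rcfType) (n : nat).
Implicit Types (u v w x y : 'rV[R]_n) (B S : seq 'rV[R]_n).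

Lemma dotpC u v : dotp u v = dotp v u.
Proof. by apply: eq_bigr => i _; rewrite mulrC. Qed.

Lemma dotp0l w : dotp 0 w = 0.
Proof. by rewrite /dotp big1 // => i _; rewrite mxE mul0r. Qed.

Lemma dotpDl u v w : dotp (u + v) w = dotp u w + dotp v w.
Proof. by rewrite /dotp -big_split; apply: eq_bigr => i _; rewrite !mxE mulrDl. Qed.

Lemma dotpZl a u w : dotp (a *: u) w = a * dotp u w.
Proof. by rewrite /dotp mulr_sumr; apply: eq_bigr => i _; rewrite !mxE mulrA. Qed.

Lemma dotpBl u v w : dotp (u - v) w = dotp u w - dotp v w.
Proof. by rewrite dotpDl -scaleN1r dotpZl mulN1r. Qed.

Lemma dotp_suml I (r : seq I) (P : pred I) (F : I -> 'rV[R]_n) w :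
  dotp (\sum_(i <- r | P i) F i) w = \sum_(i <- r | P i) dotp (F i) w.
Proof. exact: (big_morph (fun u => dotp u w) (fun u v => dotpDl u v w) (dotp0l w)). Qed.

Lemma dotp_ge0 u : 0 <= dotp u u.
Proof. by apply: sumr_ge0 => i _; rewrite -expr2 sqr_ge0. Qed.

Lemma dotp_eq0 u : (dotp u u == 0) = (u == 0).
Proof.
apply/idP/eqP => [|->]; last by rewrite dotp0l.
rewrite /dotp psumr_eq0 => [/allP u0|i _]; last by rewrite -expr2 sqr_ge0.
apply/rowP => i; rewrite mxE.
by have /u0 := mem_index_enum i; rewrite implyTb mulf_eq0 orbb => /eqP.
Qed.

Lemma enormZ a u : enorm (a *: u) = `|a| * enorm u.
Proof.
rewrite /enorm dotpZl dotpC dotpZl mulrA -expr2 sqrtrM ?sqr_ge0 //.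
by rewrite sqrtr_sqr.
Qed.

Lemma enorm_gt0 u : (0 < enorm u) = (u != 0).
Proof. by rewrite sqrtr_gt0 lt_def dotp_ge0 dotp_eq0 andbT. Qed.

Lemma enorm_normalize u : u != 0 -> enorm ((enorm u)^-1 *: u) = 1.
Proof.
by rewrite -enorm_gt0 => u_gt0; rewrite enormZ gtr0_norm ?invr_gt0 ?mulVf ?gt_eqF.
Qed.

Lemma enorm1_neq0 u : enorm u = 1 -> u != 0.
Proof. by move=> u1; rewrite -enorm_gt0 u1 ltr01. Qed.

Lemma span_full_orthogonal_eq0 B v :
  <<B>>%VS = fullv -> (forall d, d \in B -> dotp v d = 0) -> v = 0.
Proof.
move=> spanB vB; apply/eqP; rewrite -dotp_eq0.
have vs : v \in <<in_tuple B>>%VS by rewrite spanB memvf.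
rewrite {1}(coord_span vs) dotp_suml big1 // => i _.
by rewrite dotpZl dotpC vB ?mulr0 // mem_nth.
Qed.

Lemma span_full_dotp_inj B x y :
  <<B>>%VS = fullv -> (forall d, d \in B -> dotp x d = dotp y d) -> x = y.
Proof.
move=> spanB xy; apply/eqP; rewrite -subr_eq0; apply/eqP.
by apply: (span_full_orthogonal_eq0 spanB) => d dB; rewrite dotpBl xy ?subrr.
Qed.

Lemma span_full_head_mem B : (0 < n)%N -> <<B>>%VS = fullv -> head 0 B \in B.
Proof.
case: B => [|b B] n_gt0 /=; last by rewrite mem_head.
move=> /(congr1 (@dimv _ _)); rewrite span_nil dimv0 dimvf dim_matrix.
by rewrite mul1r => n0; rewrite -n0 in n_gt0.
Qed.

(* Unqualified, [polyP] would resolve to MathComp's polynomial lemma. *)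
Lemma span_full_tight_is_vertex S B x :
  {subset B <= S} -> <<B>>%VS = fullv -> Defs.polyP S x ->
  (forall d, d \in B -> dotp x d = 1) -> is_vertex S x.
Proof.
move=> BS spanB Px xB; split=> // y z t Py Pz /andP[t_gt0 t_lt1] xE.
have tight d : d \in B -> dotp y d = 1 /\ dotp z d = 1.
  move=> dB; have := xB d dB; rewrite xE dotpDl !dotpZl.
  by have := Py d (BS d dB); have := Pz d (BS d dB); nra.
by apply: (span_full_dotp_inj spanB) => d /tight[-> ->].
Qed.

Lemma in_Kcirc_unitE B y d :
  enorm y = 1 -> enorm d = 1 -> in_Kcirc B y d <-> alphaB B y < dotp d y.
Proof.
move=> y1 d1; rewrite /in_Kcirc y1 d1 mulr1 divr1.
split=> [[d0|[]//]|]; last by right; rewrite enorm1_neq0.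
by move: (enorm1_neq0 d1); rewrite d0 eqxx.
Qed.

Lemma gram_notin_KcircE B u g d :
  (0 < n)%N -> <<B>>%VS = fullv -> is_gram_vector B u g -> enorm d = 1 ->
  ~ in_Kcirc B u d <-> dotp u d <= g.
Proof.
move=> n_gt0 spanB [u1 [_ uB]] d1.
rewrite in_Kcirc_unitE // /alphaB dotpC uB ?span_full_head_mem // dotpC.
by rewrite ltNge; split=> [/negP/negPn | ->].
Qed.

End EuclideanSpace.

Theorem theorem8 (R : rcfType) (n : nat) (S : seq 'rV[R]_n) :
  (0 < n)%N ->
  (forall d, d \in S -> enorm d = 1) ->
  positive_spanning S ->
  (* (i) *)
  (forall (x : 'rV[R]_n) (B : seq 'rV[R]_n),
     is_vertex S x ->
     {subset B <= [seq d <- S | dotp x d == 1]} ->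
     basis_of fullv B ->
     is_gram_vector B ((enorm x)^-1 *: x) (enorm x)^-1 /\
     (forall d, d \in S -> ~ in_Kcirc B ((enorm x)^-1 *: x) d)) /\
  (* (ii) *)
  (forall (B : seq 'rV[R]_n) (u : 'rV[R]_n) (alpha : R),
     {subset B <= S} ->
     basis_of fullv B ->
     is_gram_vector B u alpha ->
     (forall d, d \in S -> ~ in_Kcirc B u d) ->
     [/\ is_vertex S (alpha^-1 *: u),
         (forall d, d \in B -> dotp (alpha^-1 *: u) d = 1) &
         (forall x, is_vertex S x -> (forall d, d \in B -> dotp x d = 1) ->
            x = alpha^-1 *: u)]).
Proof.
move=> n_gt0 S1 _.
split=> [x B [Px _] BT /span_basis spanB | B u g BS /span_basis spanB gram notK].
- have xB d : d \in B -> dotp x d = 1.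
    by move/BT; rewrite mem_filter => /andP[/eqP].
  have x_neq0 : x != 0.
    apply: contra_eqN (xB _ (span_full_head_mem n_gt0 spanB)) => /eqP->.
    by rewrite dotp0l eq_sym oner_eq0.
  have x_gt0 : 0 < (enorm x)^-1 by rewrite invr_gt0 enorm_gt0.
  have gram : is_gram_vector B ((enorm x)^-1 *: x) (enorm x)^-1.
    by split; [exact: enorm_normalize | split=> // d /xB xd; rewrite dotpZl xd mulr1].
  split=> // d dS; rewrite (gram_notin_KcircE n_gt0 spanB gram (S1 d dS)).
  by rewrite dotpZl; apply: ler_piMr; [exact: ltW | exact: Px].
- have g_gt0 : 0 < g by case: gram => _ [].
  have uB d : d \in B -> dotp (g^-1 *: u) d = 1.
    by case: gram => _ [_ uB] dB; rewrite dotpZl uB // mulVf ?gt_eqF.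
  have Pu : Defs.polyP S (g^-1 *: u).
    move=> d dS; rewrite dotpZl -(mulVf (lt0r_neq0 g_gt0)) ler_pM2l ?invr_gt0 //.
    by rewrite -(gram_notin_KcircE n_gt0 spanB gram (S1 d dS)); apply: notK.
  split=> [||x _ xB]; [exact: span_full_tight_is_vertex Pu uB | exact: uB |].
  by apply: (span_full_dotp_inj spanB) => d dB; rewrite xB ?uB.
Qed.
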